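(* Let $\Omega\subset\mathbb{R}^n$ be a bounded domain, $(d_1,d_2,f,\kappa)\in(0,\infty)^4$, and for $\ell\in\{1,2\}$ let $\gamma_\ell:\Omega\times\Omega\to[0,\infty)$ be measurable with $\int_\Omega\gamma_\ell(y,x)\,\mathrm{d}y=\int_\Omega\gamma_\ell(x,y)\,\mathrm{d}y\le\gamma_\infty<\infty$ for $x\in\Omega$, some $\gamma_\infty\ge1$. Let $(u^0,v^0)\in X^+\times X^+$ and let $(u,v)\in C^1([0,\infty),X^+\times X^+)$ be the solution to $$\partial_t u=d_1\Gamma_{\gamma_1}u-uv^2+f(1-u),\quad \partial_t v=d_2\Gamma_{\gamma_2}v+uv^2-(f+\kappa)v\ \text{ in }(0,\infty)\times\Omega,\quad (u,v)(0)=(u^0,v^0).$$ Then for $(t,x)\in[0,\infty)\times\Omega$, $$0\le u(t,x)\le1+e^{-ft}(\|u^0\|_\infty-1)_+,$$ $$0\le(u+v)(t,x)\le e^{-tf}\|u^0+v^0\|_\infty+\frac{1-e^{-tf}}{f}\Big[2\big(|d_1-d_2|\gamma_\infty+md_2\big)(1+\|u^0\|_\infty)+f\Big],$$ where $m:=\operatorname*{ess\,sup}_{x\in\Omega}\int_\Omega|(\gamma_1-\gamma_2)(x,y)|\,\mathrm{d}y\le2\gamma_\infty$. In particular $\limsup_{t\to\infty}\|u(t)\|_\infty\le1$, and if $\|u^0\|_\infty\le1$ then $\|u(t)\|_\infty\le1$ for all $t\ge0$.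
   Context: $X:=L_\infty(\Omega)$, $X^+:=\{z\in X: z\ge0\text{ a.e.}\}$, $\Gamma_\gamma z(x):=\int_\Omega\gamma(x,y)(z(y)-z(x))\,\mathrm{d}y$. *)

From HB Require Import structures.
From mathcomp Require Import all_boot all_order all_algebra.
From mathcomp Require Import all_classical all_reals all_analysis.
Set Implicit Arguments. Unset Strict Implicit. Unset Printing Implicit Defensive.
Import Order.TTheory GRing.Theory Num.Theory.
Local Open Scope classical_set_scope.
Local Open Scope ring_scope.

Definition Linf_norm {d} {T : measurableType d} {R : realType}
  (mu : {measure set T -> \bar R}) (Om : set T) (g : T -> R) : \bar R :=
  ereal_inf [set c : \bar R | {ae mu, forall x, Om x -> ((`|g x|)%:E <= c)%E}].

(* g represents an element of X = L_infty(Omega). *)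
Definition inLinf {d} {T : measurableType d} {R : realType}
  (mu : {measure set T -> \bar R}) (Om : set T) (g : T -> R) : Prop :=
  measurable_fun Om g /\ (Linf_norm mu Om g < +oo)%E.

(* g represents an element of X^+ = { z in X : z >= 0 a.e. }. *)
Definition inLinf_pos {d} {T : measurableType d} {R : realType}
  (mu : {measure set T -> \bar R}) (Om : set T) (g : T -> R) : Prop :=
  inLinf mu Om g /\ {ae mu, forall x, Om x -> 0 <= g x}.

Definition Linf_eq {d} {T : measurableType d} {R : realType}
  (mu : {measure set T -> \bar R}) (Om : set T) (g h : T -> R) : Prop :=
  {ae mu, forall x, Om x -> g x = h x}.

Definition Gamma {d} {T : measurableType d} {R : realType}
  (mu : {measure set T -> \bar R}) (Om : set T) (gam : T -> T -> R)
  (z : T -> R) (x : T) : R :=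
  \int[mu]_(y in Om) (gam x y * (z y - z x)).

Definition C1_Linf {d} {T : measurableType d} {R : realType}
  (mu : {measure set T -> \bar R}) (Om : set T) (u u' : R -> T -> R) : Prop :=
  (forall t, 0 <= t -> inLinf mu Om (u t) /\ inLinf mu Om (u' t)) /\
  (forall t, 0 <= t -> forall e : R, 0 < e -> exists2 del : R, 0 < del &
     forall h : R, h != 0 -> `|h| < del -> 0 <= t + h ->
       (Linf_norm mu Om (fun x => ((u (t + h) x - u t x) / h - u' t x)%R)
          <= e%:E)%E) /\
  (forall t, 0 <= t -> forall e : R, 0 < e -> exists2 del : R, 0 < del &
     forall s : R, 0 <= s -> `|s - t| < del ->
       (Linf_norm mu Om (fun x => (u' s x - u' t x)%R) <= e%:E)%E).

(* Both estimates are instances of one comparison principle in L_infty.  Let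
   w be C^1 into L_infty and suppose that, whenever w(t) <= b a.e. for some
   b >= 0, one has w' <= L (b - w) + K - f w a.e.  Then the essential supremum
   M(t) of the positive part of w(t) obeys the one-sided Dini inequality
   D^+ M <= K - f M, so by continuous induction on [0, oo) it stays below
   K/f + e^{-ft} (M(0) - K/f), the solution of y' = K - f y.
   For u the hypothesis holds with L = d1 gaminf and K = f, because
   Gamma_1 u(x) <= gaminf (b - u(x)) when u <= b, and -u v^2 <= 0.  For
   w = u + v one writes d1 Gamma_1 u + d2 Gamma_2 v
   = d2 Gamma_2 w + (d1 - d2) Gamma_1 u + d2 (Gamma_1 - Gamma_2) u and bounds
   the last two terms with 0 <= u <= 1 + |u0|_oo, given by the first estimate;
   the reaction terms u v^2 cancel and -kappa v <= 0. *)

From HB Require Import structures.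
From mathcomp Require Import all_boot all_order all_algebra.
From mathcomp Require Import all_classical all_reals all_analysis.
From mathcomp Require Import measurable_realfun ring lra.
Import Order.TTheory GRing.Theory Num.Theory.
Local Open Scope classical_set_scope.
Local Open Scope ring_scope.

Set Implicit Arguments. Unset Strict Implicit.

Section real_comparison.
Variable R : realType.
Implicit Types a b h s t x K f c : R.

Lemma le_of_le_add_small a b Q (del : R) : 0 < del ->
  (forall h, 0 < h < del -> a <= b + h * Q) -> a <= b.
Proof.
move=> del0 small; apply/ler_addgt0Pr => e e0.
have Q1 : 0 < `|Q| + 1 by rewrite ltr_wpDl.
pose h := Num.min (del / 2) (e / (`|Q| + 1)).
have h0 : 0 < h by rewrite lt_min !divr_gt0.
have h_del : h < del by rewrite /h gt_min ltr_pdivrMr //; lra.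
have hQ : h * (`|Q| + 1) <= e by rewrite -ler_pdivlMr // ge_min lexx orbT.
have := small h ltac:(by rewrite h0 h_del); have := ler_norm Q; nra.
Qed.

Lemma real_induction (P : R -> Prop) :
  (forall t, 0 <= t -> (forall s, 0 <= s < t -> P s) -> P t) ->
  (forall t, 0 <= t -> (forall s, 0 <= s <= t -> P s) ->
     exists2 del, 0 < del & forall h, 0 < h < del -> P (t + h)) ->
  forall t, 0 <= t -> P t.
Proof.
move=> closed open t t0; apply: contrapT => notPt.
pose S := [set r | 0 <= r /\ forall s, 0 <= s <= r -> P s].
have S0 : S 0.
  split=> // s /andP[s0 s0']; have -> : s = 0 by apply/le_anti/andP.
  by apply: closed => // r /andP[r0 /(le_lt_trans r0)]; rewrite ltxx.
have S_lt_t r : S r -> r < t.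
  by move=> [_ Pr]; rewrite ltNge; apply/negP => tr; apply/notPt/Pr; rewrite t0.
have supS : has_sup S by split; [exists 0 | exists t => r /S_lt_t /ltW].
set t1 := sup S.
have t1_ge0 : 0 <= t1 by apply: sup_upper_bound.
have P_before s : 0 <= s < t1 -> P s.
  move=> /andP[s0 st1].
  have t1s : 0 < t1 - s by rewrite subr_gt0.
  have [r [_ Pr] sr] := sup_adherent t1s supS.
  by apply: Pr; rewrite s0 /=; rewrite -/t1 in sr; lra.
have P_upto s : 0 <= s <= t1 -> P s.
  move=> /andP[s0]; rewrite le_eqVlt => /orP[/eqP-> | st1]; last first.
    by apply: P_before; rewrite s0.
  exact: closed.
have [del del0 P_after] := open t1 t1_ge0 P_upto.
have : S (t1 + del / 2).
  split=> [|s /andP[s0 sle]]; first lra.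
  have [st1 | t1s] := leP s t1; first by apply: P_upto; rewrite s0.
  by rewrite -(subrKC t1 s); apply: P_after; lra.
by move/(sup_upper_bound supS); rewrite -/t1; lra.
Qed.

Lemma expRN_sub_le a b : 0 <= a <= b -> expR (- a) - expR (- b) <= b - a.
Proof.
move=> /andP[a0 ab].
have -> : expR (- a) - expR (- b) = expR (- a) * (1 - expR (- (b - a))).
  by rewrite mulrBr mulr1 -expRD; congr (_ - expR _); ring.
have ea1 : expR (- a) <= 1 by rewrite expR_le1 oppr_le0.
have eba1 : expR (- (b - a)) <= 1 by rewrite expR_le1 oppr_le0 subr_ge0.
have := expR_ge1Dx (- (b - a)); have := expR_ge0 (- a); nra.
Qed.

Lemma expRN_le_quadratic x : 0 <= x -> expR (- x) <= 1 - x + x ^+ 2.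
Proof.
move=> x0; have ex0 := expR_gt0 x.
rewrite expRN -(@ler_pM2r _ (expR x)) // mulVf ?gt_eqF //.
have q0 : 0 <= 1 - x + x ^+ 2 by nra.
have := ler_wpM2l q0 (expR_ge1Dx x); nra.
Qed.

(* the solution of [y' = K - f y], [y 0 = c] *)
Definition relaxation K f c t := K / f + expR (- (f * t)) * (c - K / f).

Lemma relaxation0 K f c : relaxation K f c 0 = c.
Proof. by rewrite /relaxation mulr0 oppr0 expR0 mul1r addrC subrK. Qed.

Lemma relaxation_lipschitz K f c s t : 0 <= f -> 0 <= s <= t ->
  `|relaxation K f c s - relaxation K f c t| <= f * `|c - K / f| * (t - s).
Proof.
move=> f0 /andP[s0 st].
have fst : 0 <= f * s <= f * t by rewrite mulr_ge0 // ler_wpM2l.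
have -> : relaxation K f c s - relaxation K f c t =
  (expR (- (f * s)) - expR (- (f * t))) * (c - K / f).
  by rewrite /relaxation; ring.
rewrite normrM ger0_norm; last by rewrite subr_ge0 ler_expR lerN2 ler_wpM2l.
have -> : f * `|c - K / f| * (t - s) = (f * t - f * s) * `|c - K / f| by ring.
by rewrite ler_wpM2r // expRN_sub_le.
Qed.

Lemma relaxation_tangent K f c t h : 0 < f -> 0 <= t -> 0 <= h ->
  relaxation K f c t + h * (K - f * relaxation K f c t) <=
  relaxation K f c (t + h) + `|c - K / f| * (f * h) ^+ 2.
Proof.
move=> f0 t0 h0; set E := expR (- (f * t)); set D := c - K / f; set x := f * h.
have x0 : 0 <= x by rewrite mulr_ge0 // ltW.
have -> : relaxation K f c (t + h) = K / f + E * expR (- x) * D.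
  by rewrite /relaxation /E /x -expRD; congr (_ + expR _ * _); ring.
have -> : relaxation K f c t + h * (K - f * relaxation K f c t) =
  K / f + E * (1 - x) * D.
  by rewrite /relaxation -/E -/D /x; field; rewrite gt_eqF.
have remainder : `|1 - x - expR (- x)| <= x ^+ 2.
  rewrite ler_norml; have := expR_ge1Dx (- x); have := expRN_le_quadratic x0.
  by move=> ? ?; apply/andP; split; lra.
have E01 : 0 <= E <= 1.
  by rewrite expR_ge0 expR_le1 oppr_le0 mulr_ge0 // ltW.
have bound : E * (1 - x - expR (- x)) * D <= `|D| * x ^+ 2.
  apply: (le_trans (ler_norm _)); rewrite !normrM [leRHS]mulrC ler_wpM2r //.
  have [E0 E1] := andP E01; rewrite ger0_norm //.
  by apply: (le_trans _ remainder); rewrite ler_piMl.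
have -> : E * (1 - x) * D = E * expR (- x) * D + E * (1 - x - expR (- x)) * D by ring.
by rewrite addrA lerD2l.
Qed.

Lemma expR_decay_le a f (e : R) : 0 <= a -> 0 < f -> 0 < e ->
  exists T0, forall t, T0 <= t -> expR (- f * t) * a <= e.
Proof.
move=> a0 f0 e0; exists (a / (e * f)) => t tT0.
have ef0 : 0 < e * f by rewrite mulr_gt0.
have ft_ge : a <= e * (f * t).
  by rewrite mulrA mulrC -ler_pdivrMr // (le_trans tT0) // mulrC.
rewrite mulNr expRN mulrC ler_pdivrMr ?expR_gt0 //.
have := ler_wpM2l (ltW e0) (expR_ge1Dx (f * t)); lra.
Qed.

Section relaxation_comparison.
Variables (M : R -> R) (K f c : R).
Hypothesis f_gt0 : 0 < f.
Local Notation B := (relaxation K f c).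
Local Notation D := (c - K / f).

Lemma relaxation_left_step eps t : 0 < t ->
  (exists C, exists2 del, 0 < del &
     forall h, 0 < h < del -> M t <= M (t - h) + h * C) ->
  (forall s, 0 <= s < t -> M s <= B s + eps) -> M t <= B t + eps.
Proof.
move=> t0 [C [del del0 M_left]] IH.
apply: (@le_of_le_add_small _ _ (C + f * `|D|) (Num.min del t)).
  by rewrite lt_min del0 t0.
move=> h /andP[h0]; rewrite lt_min => /andP[hdel ht].
have th : 0 <= t - h <= t by apply/andP; lra.
have := le_trans (ler_norm _) (relaxation_lipschitz K c (ltW f_gt0) th).
have := M_left h ltac:(by rewrite h0 hdel); have := IH (t - h) ltac:(apply/andP; lra).
lra.
Qed.

Lemma relaxation_right_step0 eps : 0 < eps -> M 0 <= c ->
  (exists C, exists2 del, 0 < del &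
     forall h, 0 < h < del -> M h <= M 0 + h * C) ->
  exists2 del, 0 < del & forall h, 0 < h < del -> M (0 + h) <= B (0 + h) + eps.
Proof.
move=> eps0 M0 [C [del del0 M_right]].
have Q0 : 0 < `|C| + f * `|D| + 1.
  by have := normr_ge0 C; have := mulr_ge0 (ltW f_gt0) (normr_ge0 D); lra.
exists (Num.min del (eps / (`|C| + f * `|D| + 1))); first by rewrite lt_min del0 divr_gt0.
move=> h /andP[h0]; rewrite lt_min => /andP[hdel]; rewrite ltr_pdivlMr // add0r => hQ.
have h_ge0 : (0 : R) <= 0 <= h by rewrite lexx ltW.
have := le_trans (ler_norm _) (relaxation_lipschitz K c (ltW f_gt0) h_ge0).
rewrite relaxation0.
have := M_right h ltac:(by rewrite h0 hdel); have := ler_norm C.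
have := normr_ge0 C; nra.
Qed.

Lemma relaxation_right_step eps t : 0 < eps -> 0 < t ->
  (forall eta, 0 < eta -> exists2 del, 0 < del &
     forall h, 0 < h < del -> M (t + h) <= M t + h * (K - f * M t + eta)) ->
  M t <= B t + eps ->
  exists2 del, 0 < del & forall h, 0 < h < del -> M (t + h) <= B (t + h) + eps.
Proof.
move=> eps0 t0 M_right Mt.
(* the slack [f * eps / 2] absorbs the second-order term of [relaxation_tangent] *)
have [del del0 M_step] := M_right (f * eps / 2) ltac:(by rewrite divr_gt0 ?mulr_gt0).
have Q0 : 0 < 2 * (`|D| * f + 1).
  by have := mulr_ge0 (normr_ge0 D) (ltW f_gt0); lra.
exists (Num.min del (Num.min f^-1 (eps / (2 * (`|D| * f + 1))))).
  by rewrite !lt_min del0 invr_gt0 f_gt0 divr_gt0.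
move=> h /andP[h0]; rewrite !lt_min => /and3P[hdel].
rewrite ltr_pdivlMr // -[h < f^-1](ltr_pM2r f_gt0) mulVf ?gt_eqF // => hf hQ.
have fh0 : 0 <= f * h by rewrite mulr_ge0 // ltW.
have decay : M t * (1 - h * f) <= (B t + eps) * (1 - h * f).
  by rewrite ler_wpM2r // subr_ge0 ltW.
have remainder : `|D| * (f * h) ^+ 2 <= f * h * (eps / 2).
  have Dfh : `|D| * f * h <= eps / 2 by nra.
  by rewrite expr2; have := ler_wpM2r fh0 Dfh; nra.
have := relaxation_tangent K c f_gt0 (ltW t0) (ltW h0).
have := M_step h ltac:(by rewrite h0 hdel).
nra.
Qed.

Lemma le_relaxation : M 0 <= c ->
  (exists C, exists2 del, 0 < del &
     forall h, 0 < h < del -> M h <= M 0 + h * C) ->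
  (forall t, 0 < t -> forall eta, 0 < eta -> exists2 del, 0 < del &
     forall h, 0 < h < del -> M (t + h) <= M t + h * (K - f * M t + eta)) ->
  (forall t, 0 < t -> exists C, exists2 del, 0 < del &
     forall h, 0 < h < del -> M t <= M (t - h) + h * C) ->
  forall t, 0 <= t -> M t <= B t.
Proof.
move=> M0 M_right0 M_right M_left t t0; apply/ler_addgt0Pr => eps eps0.
move: t t0; apply: (real_induction (P := fun t => M t <= B t + eps)) => t t0 IH.
- have [-> | tn0] := eqVneq t 0; first by rewrite relaxation0 -[M 0]addr0 lerD // ltW.
  by apply: relaxation_left_step (M_left _ _) IH; rewrite lt_neqAle eq_sym tn0.
- have [-> | tn0] := eqVneq t 0; first exact: relaxation_right_step0.
  have tp : 0 < t by rewrite lt_neqAle eq_sym tn0.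
  by apply: relaxation_right_step (M_right _ tp) (IH t _); rewrite ?t0 ?lexx.
Qed.
End relaxation_comparison.

End real_comparison.

Section Linf_norm.
Variables (R : realType) (d : measure_display) (T : measurableType d).
Variables (mu : {measure set T -> \bar R}) (Om : set T).
Implicit Types g h : T -> R.

Lemma ae_le_of_le_addn (a : T -> R) (r : R) :
  (forall n : nat, {ae mu, forall x, Om x -> a x <= r + n.+1%:R^-1}) ->
  {ae mu, forall x, Om x -> a x <= r}.
Proof.
move=> le_addn; apply: filterS (ae_foralln le_addn) => x Hx Ox.
rewrite leNgt; apply/negP => /ltr_add_invr[k Hk].
by move: (Hx k Ox); rewrite leNgt Hk.
Qed.

(* The norm is [-oo] only when [Om] is negligible; then the bound is vacuous. *)
Lemma Linf_norm_ae_le g : (Linf_norm mu Om g < +oo)%E ->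
  {ae mu, forall x, Om x -> `|g x| <= fine (Linf_norm mu Om g)}.
Proof.
rewrite /Linf_norm; set S := [set c | _].
case E : (ereal_inf S) => [r| |] // _.
- apply: ae_le_of_le_addn => n.
  have fS : ereal_inf S \is a fin_num by rewrite E.
  have n0 : 0 < n.+1%:R^-1 :> R by rewrite invr_gt0.
  have [c Sc Hc] := lb_ereal_inf_adherent n0 fS.
  apply: filterS Sc => x H Ox; rewrite -lee_fin; apply: (le_trans (H Ox)).
  by rewrite E /= in Hc; apply: ltW.
- have [c Sc Hc] : exists2 c, S c & (c < (-1)%:E)%E.
    by apply: ereal_inf_lt; rewrite E ltNyr.
  apply: filterS Sc => x H Ox; exfalso.
  by have := le_lt_trans (H Ox) Hc; rewrite lte_fin ltNge (le_trans _ (normr_ge0 _)).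
Qed.

Lemma ae_le_Linf_norm g (c : R) :
  {ae mu, forall x, Om x -> `|g x| <= c} -> (Linf_norm mu Om g <= c%:E)%E.
Proof. by move=> gc; apply: ereal_inf_lbound; apply: filterS gc => x H /H. Qed.

Lemma Linf_norm_fine_ge0 g : 0 <= fine (Linf_norm mu Om g).
Proof.
rewrite /Linf_norm; set S := [set c | _].
case E : (ereal_inf S) => [r| |] //=; rewrite leNgt; apply/negP => r0.
have [c Sc Hc] : exists2 c, S c & (c < 0%:E)%E by apply: ereal_inf_lt; rewrite E lte_fin.
suff /ereal_inf_lbound : S -oo%E by rewrite E.
apply: filterS Sc => x H Ox; exfalso.
by have := le_lt_trans (H Ox) Hc; rewrite lte_fin ltNge normr_ge0.
Qed.

Lemma Linf_norm_fine_le g (c : R) : 0 <= c ->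
  (Linf_norm mu Om g <= c%:E)%E -> fine (Linf_norm mu Om g) <= c.
Proof. by move=> c0; case: (Linf_norm mu Om g) => //= r; rewrite lee_fin. Qed.

Lemma Linf_norm_le_ae g (e : R) : 0 <= e -> (Linf_norm mu Om g <= e%:E)%E ->
  {ae mu, forall x, Om x -> `|g x| <= e}.
Proof.
move=> e0 ge; apply: filterS (Linf_norm_ae_le (le_lt_trans ge (ltry e))) => x H Ox.
exact: le_trans (H Ox) (Linf_norm_fine_le e0 ge).
Qed.

Lemma Linf_normD_le g h (a b : R) : 0 <= a -> 0 <= b ->
  (Linf_norm mu Om g <= a%:E)%E -> (Linf_norm mu Om h <= b%:E)%E ->
  (Linf_norm mu Om (fun x => (g x + h x)%R) <= (a + b)%:E)%E.
Proof.
move=> a0 b0 /(Linf_norm_le_ae a0) ga /(Linf_norm_le_ae b0) hb.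
apply: ae_le_Linf_norm; apply: filterS2 ga hb => x ga hb Ox.
exact: le_trans (ler_normD _ _) (lerD (ga Ox) (hb Ox)).
Qed.

Lemma inLinfD g h : inLinf mu Om g -> inLinf mu Om h -> inLinf mu Om (fun x => g x + h x).
Proof.
have le_fine k : (Linf_norm mu Om k < +oo)%E ->
    (Linf_norm mu Om k <= (fine (Linf_norm mu Om k))%:E)%E.
  by case: (Linf_norm mu Om k) => //= _; rewrite leNye.
move=> [mg gfin] [mh hfin]; split; first exact: measurable_funD.
apply: le_lt_trans (ltry (fine (Linf_norm mu Om g) + fine (Linf_norm mu Om h))).
by apply: Linf_normD_le; rewrite ?Linf_norm_fine_ge0 ?le_fine.
Qed.

Lemma Linf_normD_le_half g h (e : R) : 0 < e ->
  (Linf_norm mu Om g <= (e / 2)%:E)%E -> (Linf_norm mu Om h <= (e / 2)%:E)%E ->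
  (Linf_norm mu Om (fun x => (g x + h x)%R) <= e%:E)%E.
Proof.
move=> e0 ge he; have e2 : 0 <= e / 2 by rewrite divr_ge0 ?ltW.
by have := Linf_normD_le e2 e2 ge he; rewrite -splitr.
Qed.

Lemma C1_LinfD (u u' v v' : R -> T -> R) :
  C1_Linf mu Om u u' -> C1_Linf mu Om v v' ->
  C1_Linf mu Om (fun t x => u t x + v t x) (fun t x => u' t x + v' t x).
Proof.
move=> [uL [uD uC]] [vL [vD vC]]; split; [|split] => t t0.
- by split; apply: inLinfD; [exact: (uL t t0).1 | exact: (vL t t0).1
                           | exact: (uL t t0).2 | exact: (vL t t0).2].
- move=> e e0; have e2 : 0 < e / 2 by rewrite divr_gt0.
  have [delu delu0 u_le] := uD t t0 _ e2; have [delv delv0 v_le] := vD t t0 _ e2.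
  exists (Num.min delu delv) => [|h hn0]; first by rewrite lt_min delu0 delv0.
  rewrite lt_min => /andP[hu hv] th.
  rewrite (_ : (fun x => _) = fun x =>
    ((u (t + h) x - u t x) / h - u' t x) + ((v (t + h) x - v t x) / h - v' t x)).
    by apply: Linf_normD_le_half; [| exact: u_le | exact: v_le].
  by apply/funext => x; rewrite !mulrBl; ring.
- move=> e e0; have e2 : 0 < e / 2 by rewrite divr_gt0.
  have [delu delu0 u_le] := uC t t0 _ e2; have [delv delv0 v_le] := vC t t0 _ e2.
  exists (Num.min delu delv) => [|s s0]; first by rewrite lt_min delu0 delv0.
  rewrite lt_min => /andP[su sv].
  rewrite (_ : (fun x => _) = fun x => (u' s x - u' t x) + (v' s x - v' t x)).
    by apply: Linf_normD_le_half; [| exact: u_le | exact: v_le].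
  by apply/funext => x; ring.
Qed.

Lemma C1_Linf_taylor (w w' : R -> T -> R) : C1_Linf mu Om w w' ->
  forall s, 0 <= s -> forall e, 0 < e -> exists2 del, 0 < del &
  forall r, 0 <= r -> `|r - s| < del -> {ae mu, forall x, Om x ->
    `|w r x - w s x - (r - s) * w' s x| <= `|r - s| * e}.
Proof.
move=> [_ [wD _]] s s0 e e0; have [del del0 w_le] := wD s s0 e e0.
exists del => // r r0 rs; have [-> | rsn0] := eqVneq r s.
  by apply: aeW => x _; rewrite !subrr mul0r subr0 normr0 mul0r.
have rs0 : r - s != 0 by rewrite subr_eq0.
have := w_le (r - s) rs0 rs; rewrite subrKC => /(_ r0)/(Linf_norm_le_ae (ltW e0)).
apply: filterS => x H Ox.
have -> : w r x - w s x - (r - s) * w' s x =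
  (r - s) * ((w r x - w s x) / (r - s) - w' s x) by field.
by rewrite normrM ler_wpM2l // H.
Qed.

Definition esup_pos g := fine (Linf_norm mu Om (fun x => Num.max (g x) 0)).

Lemma esup_pos_ge0 g : 0 <= esup_pos g.
Proof. exact: Linf_norm_fine_ge0. Qed.

Lemma ae_le_esup_pos g : inLinf mu Om g ->
  {ae mu, forall x, Om x -> g x <= esup_pos g}.
Proof.
move=> [_ /Linf_norm_ae_le g_le]; set C := fine (Linf_norm mu Om g).
have /Linf_norm_ae_le : (Linf_norm mu Om (fun x => Num.max (g x) 0%R) < +oo)%E.
  apply: le_lt_trans (ltry C); apply: ae_le_Linf_norm; apply: filterS g_le => x H Ox.
  apply: le_trans (H Ox); rewrite ger0_norm ?le_max ?lexx ?orbT //.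
  by rewrite ge_max normr_ge0 ler_norm.
apply: filterS => x H Ox; apply: le_trans (H Ox).
by rewrite (le_trans _ (ler_norm _)) // le_max lexx.
Qed.

Lemma esup_pos_le g (b : R) : 0 <= b ->
  {ae mu, forall x, Om x -> g x <= b} -> esup_pos g <= b.
Proof.
move=> b0 g_le; apply: Linf_norm_fine_le => //; apply: ae_le_Linf_norm.
by apply: filterS g_le => x H Ox; rewrite ger0_norm ?le_max ?lexx ?orbT // ge_max H.
Qed.
End Linf_norm.

Section Linf_comparison.
Variables (R : realType) (d : measure_display) (T : measurableType d).
Variables (mu : {measure set T -> \bar R}) (Om : set T).
Variables (w w' : R -> T -> R) (L K f c : R).
Hypotheses (f_gt0 : 0 < f) (L_ge0 : 0 <= L) (K_ge0 : 0 <= K) (c_ge0 : 0 <= c).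
Hypothesis w_C1 : C1_Linf mu Om w w'.
Hypothesis w0_le : {ae mu, forall x, Om x -> w 0 x <= c}.
Hypothesis w'_le : forall t, 0 < t -> forall b, 0 <= b ->
  {ae mu, forall x, Om x -> w t x <= b} ->
  {ae mu, forall x, Om x -> w' t x <= L * (b - w t x) + K - f * w t x}.

Local Notation M t := (esup_pos mu Om (w t)).

Let w_Linf t : 0 <= t -> inLinf mu Om (w t).
Proof. by case: w_C1 => wL _ t0; case: (wL t t0). Qed.

Let w'_bound t : 0 <= t -> exists2 C, 0 <= C &
  {ae mu, forall x, Om x -> w' t x <= C}.
Proof.
case: w_C1 => wL _ t0; have [_ [_ /Linf_norm_ae_le w'_le_C]] := wL t t0.
exists (fine (Linf_norm mu Om (w' t))); first exact: Linf_norm_fine_ge0.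
by apply: filterS w'_le_C => x H /H; apply: le_trans (ler_norm _).
Qed.

Let esup_pos_right0 : exists C, exists2 del, 0 < del &
  forall h, 0 < h < del -> M h <= M 0 + h * C.
Proof.
have [C C0 w'0_le] := w'_bound (lexx 0).
have [del del0 taylor] := C1_Linf_taylor w_C1 (lexx 0) ltr01.
exists (C + 1), del => // h /andP[h0 hdel].
apply: esup_pos_le; first by have := esup_pos_ge0 mu Om (w 0); nra.
have := taylor h (ltW h0); rewrite subr0 gtr0_norm // => /(_ hdel).
apply: filterS3 w'0_le (ae_le_esup_pos (w_Linf (lexx 0))) => x H1 H2 H3 Ox.
have := H1 Ox; have := H2 Ox; have := H3 Ox; rewrite mulr1 ler_norml.
nra.
Qed.

Let esup_pos_left t : 0 < t -> exists C, exists2 del, 0 < del &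
  forall h, 0 < h < del -> M t <= M (t - h) + h * C.
Proof.
move=> t0; have [C C0 w't_le] := w'_bound (ltW t0).
have [del del0 taylor] := C1_Linf_taylor w_C1 (ltW t0) ltr01.
exists (C + 1), (Num.min del t) => [|h /andP[h0]]; first by rewrite lt_min del0 t0.
rewrite lt_min => /andP[hdel ht]; have th : 0 <= t - h by rewrite subr_ge0 ltW.
apply: esup_pos_le; first by have := esup_pos_ge0 mu Om (w (t - h)); nra.
have := taylor (t - h) th; rewrite addrAC subrr add0r normrN gtr0_norm // => /(_ hdel).
apply: filterS3 w't_le (ae_le_esup_pos (w_Linf th)) => x H1 H2 H3 Ox.
have := H1 Ox; have := H2 Ox; have := H3 Ox; rewrite mulr1 ler_norml.
nra.
Qed.

Let esup_pos_right t : 0 < t -> forall eta, 0 < eta -> exists2 del, 0 < del &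
  forall h, 0 < h < del -> M (t + h) <= M t + h * (K - f * M t + eta).
Proof.
move=> t0 eta eta0; have Mt0 := esup_pos_ge0 mu Om (w t).
have w_le_Mt := ae_le_esup_pos (w_Linf (ltW t0)).
have [del del0 taylor] := C1_Linf_taylor w_C1 (ltW t0) eta0.
have Lf : 0 < L + f by rewrite ltr_wpDl.
exists (Num.min del (L + f)^-1) => [|h /andP[h0]]; first by rewrite lt_min del0 invr_gt0.
rewrite lt_min => /andP[hdel]; rewrite -(ltr_pM2r Lf) mulVf ?gt_eqF // => hLf.
have th : 0 <= t + h by apply: addr_ge0; apply: ltW.
(* as [h (L + f) < 1], [w + h (L (M t - w) - f w)] is increasing in [w], so [w <= M t]
   may be substituted *)
apply: esup_pos_le.
  have hL := mulr_ge0 (ltW h0) L_ge0.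
  have : 0 <= M t * (1 - h * f) by rewrite mulr_ge0 // subr_ge0; lra.
  have := mulr_ge0 (ltW h0) K_ge0; have := mulr_gt0 h0 eta0; nra.
have := taylor (t + h) th; rewrite addrAC subrr add0r gtr0_norm // => /(_ hdel).
apply: filterS3 (w'_le t0 Mt0 w_le_Mt) w_le_Mt => x H1 H2 H3 Ox.
have := H1 Ox; have := H2 Ox; have := H3 Ox; rewrite ler_norml.
nra.
Qed.

Lemma Linf_comparison t : 0 <= t ->
  {ae mu, forall x, Om x -> w t x <= relaxation K f c t}.
Proof.
move=> t0; have Mt_le := le_relaxation f_gt0 (esup_pos_le c_ge0 w0_le)
  esup_pos_right0 esup_pos_right esup_pos_left t0.
by apply: filterS (ae_le_esup_pos (w_Linf t0)) => x H Ox; apply: le_trans (H Ox) Mt_le.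
Qed.
End Linf_comparison.

Section kernel_integrals.
Variables (R : realType) (d : measure_display) (T : measurableType d).
Variables (mu : {measure set T -> \bar R}) (Om : set T).
Hypothesis mOm : measurable Om.
Local Notation integrable g := (mu.-integrable Om (EFin \o g)).

Lemma integrableM_ae_bounded (g h : T -> R) (C : R) :
  integrable g -> measurable_fun Om h -> {ae mu, forall y, Om y -> `|h y| <= C} ->
  integrable (fun y => g y * h y).
Proof.
move=> /integrableP[/measurable_EFinP mg gfin] mh hC.
have mgh : measurable_fun Om (fun y => g y * h y) by exact: measurable_funM.
apply/integrableP; split; first exact/measurable_EFinP.
apply: le_lt_trans (_ : \int[mu]_(y in Om) (`|C|%:E * `|(g y)%:E|) < +oo)%E.
  apply: ae_ge0_le_integral => //.
  - by apply/measurableT_comp/measurable_EFinP.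
  - by apply: emeasurable_funM => //; apply/measurableT_comp/measurable_EFinP.
  apply: filterS hC => y H Oy /=.
  by rewrite -EFinM lee_fin normrM mulrC ler_wpM2r // (le_trans (H Oy) (ler_norm _)).
rewrite ge0_integralZl ?lte_mul_pinfty //.
by apply/measurableT_comp/measurable_EFinP.
Qed.

Lemma ae_le_Rintegral (f1 f2 : T -> R) : integrable f1 -> integrable f2 ->
  {ae mu, forall y, Om y -> f1 y <= f2 y} ->
  \int[mu]_(y in Om) f1 y <= \int[mu]_(y in Om) f2 y.
Proof.
move=> i1 i2 f12; rewrite -subr_ge0 -RintegralB //.
set F := EFin \o (fun y => f2 y - f1 y).
have mF : measurable_fun Om F.
  apply/measurable_EFinP; apply: measurable_funB; apply/measurable_EFinP.
  - by case/integrableP: i2.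
  - by case/integrableP: i1.
rewrite /Rintegral (ae_eq_integral (funepos F)) //.
- by apply: fine_ge0; apply: integral_ge0 => y _; apply: funepos_ge0.
- exact: measurable_funepos.
- apply: filterS f12 => y H Oy; rewrite funeposE /= max_l //.
  by rewrite lee_fin subr_ge0 H.
Qed.

Lemma Rintegral_le_of_integral_le (g : T -> R) (G : R) :
  (forall y, Om y -> 0 <= g y) -> (\int[mu]_(y in Om) (g y)%:E <= G%:E)%E ->
  \int[mu]_(y in Om) g y <= G.
Proof.
move=> g0; have : (0 <= \int[mu]_(y in Om) (g y)%:E)%E.
  by apply: integral_ge0 => y Oy; rewrite lee_fin g0.
by rewrite /Rintegral; case: (\int[mu]_(y in Om) (g y)%:E)%E => //= r _; rewrite lee_fin.
Qed.

Lemma integrable_of_integral_le (g : T -> R) (G : R) :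
  measurable_fun Om g -> (forall y, Om y -> 0 <= g y) ->
  (\int[mu]_(y in Om) (g y)%:E <= G%:E)%E -> integrable g.
Proof.
move=> mg g0 gG; apply/integrableP; split; first exact/measurable_EFinP.
under eq_integral => y /set_mem Oy do rewrite /= ger0_norm ?g0 //.
exact: le_lt_trans gG (ltry _).
Qed.

Lemma measurable_fun_section (gam : T -> T -> R) (x : T) :
  measurable_fun (Om `*` Om) (fun p : T * T => gam p.1 p.2) ->
  Om x -> measurable_fun Om (gam x).
Proof.
move=> mgam Ox.
have := measurable_comp (g := pair x) (E := Om) (measurableX mOm mOm) _ mgam.
apply; first by move=> _ [y Oy <-].
exact: measurable_funS (pair1_measurable x).
Qed.

Lemma Rintegral_mul_abs_le (k h : T -> R) (B : R) :
  integrable k -> measurable_fun Om h -> {ae mu, forall y, Om y -> `|h y| <= B} ->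
  `|\int[mu]_(y in Om) (k y * h y)| <= \int[mu]_(y in Om) `|k y| * B.
Proof.
move=> ik mh hB; have ikh := integrableM_ae_bounded ik mh hB.
apply: le_trans (le_normr_Rintegral mOm ikh) _.
rewrite -RintegralZr //; last exact: integrable_norm.
apply: ae_le_Rintegral; first exact: integrable_norm.
  apply: (integrableM_ae_bounded (C := `|B|)) (integrable_norm ik) (measurable_cst _) _.
  exact: aeW.
by apply: filterS hB => y H Oy; rewrite normrM ler_wpM2l // H.
Qed.
End kernel_integrals.

Section Gamma_kernel.
Variables (R : realType) (d : measure_display) (T : measurableType d).
Variables (mu : {measure set T -> \bar R}) (Om : set T).
Hypothesis mOm : measurable Om.
Variables (gam : T -> T -> R) (gaminf : R).
Hypothesis mgam : measurable_fun (Om `*` Om) (fun p : T * T => gam p.1 p.2).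
Hypothesis gam_ge0 : forall x y, Om x -> Om y -> 0 <= gam x y.
Hypothesis gam_bd : forall x, Om x ->
  (\int[mu]_(y in Om) (gam x y)%:E <= gaminf%:E)%E.
Local Notation integrable g := (mu.-integrable Om (EFin \o g)).

Lemma integrable_kernel x : Om x -> integrable (gam x).
Proof.
move=> Ox; apply: integrable_of_integral_le (gam_bd Ox) => //.
  exact: measurable_fun_section.
by move=> y; apply: gam_ge0.
Qed.

Lemma kernel_mass_le x : Om x -> \int[mu]_(y in Om) gam x y <= gaminf.
Proof. by move=> Ox; apply: Rintegral_le_of_integral_le (gam_bd Ox) => y; apply: gam_ge0. Qed.

Lemma inLinf_sub_cst (z : T -> R) (a : R) : inLinf mu Om z ->
  measurable_fun Om (fun y => z y - a) /\
  exists C, {ae mu, forall y, Om y -> `|z y - a| <= C}.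
Proof.
move=> [mz /Linf_norm_ae_le z_le]; split; first exact: measurable_funB.
exists (fine (Linf_norm mu Om z) + `|a|); apply: filterS z_le => y H Oy.
by apply: le_trans (ler_normB _ _) _; rewrite lerD2r H.
Qed.

Lemma integrable_Gamma_integrand x (z : T -> R) : Om x -> inLinf mu Om z ->
  integrable (fun y => gam x y * (z y - z x)).
Proof.
move=> Ox /(inLinf_sub_cst (z x))[mz [C zC]].
exact: integrableM_ae_bounded (integrable_kernel Ox) mz zC.
Qed.

Lemma GammaD x (z1 z2 : T -> R) : Om x -> inLinf mu Om z1 -> inLinf mu Om z2 ->
  Gamma mu Om gam (fun y => z1 y + z2 y) x = Gamma mu Om gam z1 x + Gamma mu Om gam z2 x.
Proof.
move=> Ox z1L z2L; rewrite /Gamma -RintegralD //;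
  try exact: integrable_Gamma_integrand.
by apply: eq_Rintegral => y _; ring.
Qed.

Lemma Gamma_le_mass x (z : T -> R) (b : R) : Om x -> inLinf mu Om z ->
  {ae mu, forall y, Om y -> z y <= b} -> z x <= b ->
  Gamma mu Om gam z x <= gaminf * (b - z x).
Proof.
move=> Ox zL z_le zx_le.
apply: (@le_trans _ _ (\int[mu]_(y in Om) (gam x y * (b - z x)))).
  apply: ae_le_Rintegral => //; first exact: integrable_Gamma_integrand.
    have cst_le : {ae mu, forall y, Om y -> `|b - z x| <= `|b - z x|} by exact: aeW.
    exact: integrableM_ae_bounded (integrable_kernel Ox) (measurable_cst _) cst_le.
  by apply: filterS z_le => y H Oy; rewrite ler_wpM2l ?gam_ge0 // lerB // H.
by rewrite RintegralZr ?integrable_kernel // ler_wpM2r ?subr_ge0 ?kernel_mass_le.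
Qed.

Lemma Gamma_abs_le_mass x (z : T -> R) (B : R) : Om x -> inLinf mu Om z -> 0 <= B ->
  {ae mu, forall y, Om y -> `|z y - z x| <= B} ->
  `|Gamma mu Om gam z x| <= gaminf * B.
Proof.
move=> Ox /(inLinf_sub_cst (z x))[mz _] B0 zB.
apply: le_trans (Rintegral_mul_abs_le mOm (integrable_kernel Ox) mz zB) _.
rewrite ler_wpM2r //; under eq_Rintegral => y /set_mem Oy do rewrite ger0_norm ?gam_ge0 //.
exact: kernel_mass_le.
Qed.
End Gamma_kernel.

Section two_kernels.
Variables (R : realType) (d : measure_display) (T : measurableType d).
Variables (mu : {measure set T -> \bar R}) (Om : set T).
Hypothesis mOm : measurable Om.
Variables (gam1 gam2 : T -> T -> R) (gaminf : R).
Hypothesis mgam1 : measurable_fun (Om `*` Om) (fun p : T * T => gam1 p.1 p.2).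
Hypothesis mgam2 : measurable_fun (Om `*` Om) (fun p : T * T => gam2 p.1 p.2).
Hypothesis gam1_ge0 : forall x y, Om x -> Om y -> 0 <= gam1 x y.
Hypothesis gam2_ge0 : forall x y, Om x -> Om y -> 0 <= gam2 x y.
Hypothesis gam1_bd : forall x, Om x ->
  (\int[mu]_(y in Om) (gam1 x y)%:E <= gaminf%:E)%E.
Hypothesis gam2_bd : forall x, Om x ->
  (\int[mu]_(y in Om) (gam2 x y)%:E <= gaminf%:E)%E.

Let integrable1 x (Ox : Om x) := integrable_kernel mOm mgam1 gam1_ge0 gam1_bd Ox.
Let integrable2 x (Ox : Om x) := integrable_kernel mOm mgam2 gam2_ge0 gam2_bd Ox.

Let integrable_kernel_sub x : Om x ->
  mu.-integrable Om (EFin \o (fun y => gam1 x y - gam2 x y)).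
Proof.
by move=> Ox; apply: eq_integrable (integrableB mOm (integrable1 Ox) (integrable2 Ox)).
Qed.

Lemma Gamma_sub_kernel_le x (z : T -> R) (B : R) : Om x -> inLinf mu Om z ->
  {ae mu, forall y, Om y -> `|z y - z x| <= B} ->
  Gamma mu Om gam1 z x - Gamma mu Om gam2 z x <=
  \int[mu]_(y in Om) `|gam1 x y - gam2 x y| * B.
Proof.
move=> Ox zL zB; have [mz _] := inLinf_sub_cst (z x) zL.
rewrite /Gamma -RintegralB //.
- under eq_Rintegral do rewrite -mulrBl.
  exact: le_trans (ler_norm _) (Rintegral_mul_abs_le mOm (integrable_kernel_sub Ox) mz zB).
- exact (integrable_Gamma_integrand mOm mgam1 gam1_ge0 gam1_bd Ox zL).
- exact (integrable_Gamma_integrand mOm mgam2 gam2_ge0 gam2_bd Ox zL).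
Qed.

Lemma Linf_kernel_diff_le :
  (Linf_norm mu Om (fun x => (\int[mu]_(y in Om) `|gam1 x y - gam2 x y|)%R)
     <= (2 * gaminf)%:E)%E.
Proof.
apply: ae_le_Linf_norm; apply: aeW => x Ox.
rewrite ger0_norm; last by apply: Rintegral_ge0 => y _.
apply: le_trans (_ : \int[mu]_(y in Om) (gam1 x y + gam2 x y) <= _).
  apply: le_Rintegral => //; first exact: integrable_norm (integrable_kernel_sub Ox).
    exact: eq_integrable (integrableD mOm (integrable1 Ox) (integrable2 Ox)).
  move=> y Oy; apply: le_trans (ler_normB _ _) _.
  by rewrite !ger0_norm ?gam1_ge0 ?gam2_ge0.
rewrite RintegralD ?integrable1 ?integrable2 // mulr2n mulrDl mul1r.
by apply: lerD; apply: kernel_mass_le.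
Qed.
End two_kernels.

Section gray_scott.
Variables (R : realType) (d : measure_display) (T : measurableType d).
Variables (mu : {measure set T -> \bar R}) (Om : set T).
Hypothesis mOm : measurable Om.
Variables (d1 d2 f kappa : R).
Hypotheses (d1_gt0 : 0 < d1) (d2_gt0 : 0 < d2) (f_gt0 : 0 < f) (kappa_gt0 : 0 < kappa).
Variables (gam1 gam2 : T -> T -> R) (gaminf : R).
Hypothesis gaminf_ge1 : 1 <= gaminf.
Hypothesis mgam1 : measurable_fun (Om `*` Om) (fun p : T * T => gam1 p.1 p.2).
Hypothesis mgam2 : measurable_fun (Om `*` Om) (fun p : T * T => gam2 p.1 p.2).
Hypothesis gam1_ge0 : forall x y, Om x -> Om y -> 0 <= gam1 x y.
Hypothesis gam2_ge0 : forall x y, Om x -> Om y -> 0 <= gam2 x y.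
Hypothesis gam1_bd : forall x, Om x ->
  (\int[mu]_(y in Om) (gam1 x y)%:E <= gaminf%:E)%E.
Hypothesis gam2_bd : forall x, Om x ->
  (\int[mu]_(y in Om) (gam2 x y)%:E <= gaminf%:E)%E.
Variables (u0 v0 : T -> R) (u v u' v' : R -> T -> R).
Hypotheses (u0_pos : inLinf_pos mu Om u0) (v0_pos : inLinf_pos mu Om v0).
Hypotheses (u_C1 : C1_Linf mu Om u u') (v_C1 : C1_Linf mu Om v v').
Hypothesis u_pos : forall t, 0 <= t -> inLinf_pos mu Om (u t).
Hypothesis v_pos : forall t, 0 <= t -> inLinf_pos mu Om (v t).
Hypothesis u_eq : forall t, 0 < t -> {ae mu, forall x, Om x ->
  u' t x = d1 * Gamma mu Om gam1 (u t) x - u t x * v t x ^+ 2 + f * (1 - u t x)}.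
Hypothesis v_eq : forall t, 0 < t -> {ae mu, forall x, Om x ->
  v' t x = d2 * Gamma mu Om gam2 (v t) x + u t x * v t x ^+ 2 - (f + kappa) * v t x}.
Hypotheses (u_init : Linf_eq mu Om (u 0) u0) (v_init : Linf_eq mu Om (v 0) v0).

Local Notation N0u := (fine (Linf_norm mu Om u0)).
Local Notation N0uv := (fine (Linf_norm mu Om (fun x => u0 x + v0 x))).
Local Notation m := (fine (Linf_norm mu Om
  (fun x => \int[mu]_(y in Om) `|gam1 x y - gam2 x y|))).

Let gaminf_ge0 : 0 <= gaminf. Proof. exact: le_trans ler01 gaminf_ge1. Qed.

Let init_le (w w0 : T -> R) : inLinf mu Om w0 -> Linf_eq mu Om w w0 ->
  {ae mu, forall x, Om x -> w x <= fine (Linf_norm mu Om w0)}.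
Proof.
move=> [_ /Linf_norm_ae_le w0_le] w_w0.
apply: filterS2 w_w0 w0_le => x w_eq w0_le_x Ox.
by rewrite w_eq //; apply: le_trans (ler_norm _) (w0_le_x Ox).
Qed.

Lemma u_growth t : 0 < t -> forall b, 0 <= b ->
  {ae mu, forall x, Om x -> u t x <= b} ->
  {ae mu, forall x, Om x -> u' t x <= d1 * gaminf * (b - u t x) + f - f * u t x}.
Proof.
move=> t0 b b0 u_le; have [uL u_ge0] := u_pos (ltW t0).
apply: (filterS3 _ _ (u_eq t0) u_le u_ge0) => x eq_x ux_le ux_ge0 Ox.
have := Gamma_le_mass mOm mgam1 gam1_ge0 gam1_bd Ox uL u_le (ux_le Ox).
move=> /(ler_wpM2l (ltW d1_gt0)); rewrite eq_x //.
have := mulr_ge0 (ux_ge0 Ox) (sqr_ge0 (v t x)); lra.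
Qed.

Lemma u_bound t : 0 <= t -> {ae mu, forall x, Om x ->
  0 <= u t x <= 1 + expR (- f * t) * Num.max (N0u - 1) 0}.
Proof.
move=> t0; have N0u_ge0 := Linf_norm_fine_ge0 mu Om u0.
have u0_le : {ae mu, forall x, Om x -> u 0 x <= Num.max N0u 1}.
  apply: filterS (init_le u0_pos.1 u_init) => x H Ox.
  by rewrite le_max H.
have c_ge0 : 0 <= Num.max N0u 1 by rewrite le_max N0u_ge0.
have := Linf_comparison f_gt0 (mulr_ge0 (ltW d1_gt0) gaminf_ge0) (ltW f_gt0)
  c_ge0 u_C1 u0_le u_growth t0.
rewrite /relaxation divff ?gt_eqF // addr_maxl subrr mulNr.
by apply: filterS2 (u_pos t0).2 => x u_ge0 u_le Ox; rewrite u_ge0 ?u_le.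
Qed.

Let u_le_bound t : 0 <= t -> {ae mu, forall x, Om x -> 0 <= u t x <= 1 + N0u}.
Proof.
move=> t0; apply: filterS (u_bound t0) => x H Ox; have /andP[-> u_le] := H Ox.
apply: le_trans u_le _; rewrite lerD2l.
have E1 : expR (- f * t) <= 1.
  by rewrite expR_le1 mulNr oppr_le0 mulr_ge0 // ltW.
have M0 : 0 <= Num.max (N0u - 1) 0 by rewrite le_max lexx orbT.
have M1 : Num.max (N0u - 1) 0 <= N0u.
  by rewrite ge_max Linf_norm_fine_ge0 andbT gerBl.
by apply: le_trans M1; rewrite ler_piMl.
Qed.

Let ae_and (P Q : T -> Prop) :
  {ae mu, forall x, Om x -> P x} -> {ae mu, forall x, Om x -> Q x} ->
  {ae mu, forall x, Om x -> P x /\ Q x}.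
Proof. by move=> HP HQ; apply: (filterS2 _ _ HP HQ) => x P_x Q_x Ox; split; auto. Qed.

Local Notation K := (2 * (`|d1 - d2| * gaminf + m * d2) * (1 + N0u) + f).

Lemma uv_growth t : 0 < t -> forall b, 0 <= b ->
  {ae mu, forall x, Om x -> u t x + v t x <= b} ->
  {ae mu, forall x, Om x -> u' t x + v' t x <=
     d2 * gaminf * (b - (u t x + v t x)) + K - f * (u t x + v t x)}.
Proof.
move=> t0 b b0 w_le; have [uL u_ge0] := u_pos (ltW t0); have [vL v_ge0] := v_pos (ltW t0).
have U0 : 0 <= 2 * (1 + N0u) by have := Linf_norm_fine_ge0 mu Om u0; lra.
have m_le : {ae mu, forall x, Om x -> \int[mu]_(y in Om) `|gam1 x y - gam2 x y| <= m}.
  have := Linf_kernel_diff_le mOm mgam1 mgam2 gam1_ge0 gam2_ge0 gam1_bd gam2_bd.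
  move=> /(le_lt_trans)/(_ (ltry _))/Linf_norm_ae_le.
  by apply: filterS => x H Ox; apply: le_trans (ler_norm _) (H Ox).
apply: (filterS3 _ _ (ae_and (u_eq t0) (v_eq t0)) (ae_and (u_le_bound (ltW t0)) v_ge0)
  (ae_and w_le m_le)) => x eqs bounds w_m Ox.
have [eq_u eq_v] := eqs Ox; have [ux_bd vx_ge0] := bounds Ox.
have [wx_le mx_le] := w_m Ox.
have uy_bd : {ae mu, forall y, Om y -> `|u t y - u t x| <= 2 * (1 + N0u)}.
  apply: filterS (u_le_bound (ltW t0)) => y H Oy.
  have /andP[? ?] := H Oy; have /andP[? ?] := ux_bd.
  by rewrite ler_norml; apply/andP; split; lra.
have Gamma_w := Gamma_le_mass mOm mgam2 gam2_ge0 gam2_bd Ox (inLinfD uL vL) w_le wx_le.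
rewrite (GammaD mOm mgam2 gam2_ge0 gam2_bd Ox uL vL) in Gamma_w.
have Gamma_u := Gamma_abs_le_mass mOm mgam1 gam1_ge0 gam1_bd Ox uL U0 uy_bd.
have Gamma_sub := Gamma_sub_kernel_le mOm mgam1 mgam2 gam1_ge0 gam2_ge0
  gam1_bd gam2_bd Ox uL uy_bd.
have p1 : (d1 - d2) * Gamma mu Om gam1 (u t) x <= `|d1 - d2| * (gaminf * (2 * (1 + N0u))).
  by apply: le_trans (ler_norm _) _; rewrite normrM ler_wpM2l.
have p2 := ler_wpM2l (ltW d2_gt0) (le_trans Gamma_sub (ler_wpM2r U0 mx_le)).
have p3 := ler_wpM2l (ltW d2_gt0) Gamma_w.
have p4 := mulr_ge0 (ltW kappa_gt0) vx_ge0.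
rewrite eq_u eq_v; lra.
Qed.

Lemma uv_bound t : 0 <= t -> {ae mu, forall x, Om x ->
  0 <= u t x + v t x <= expR (- t * f) * N0uv + (1 - expR (- t * f)) / f * K}.
Proof.
move=> t0; have N0u_ge0 := Linf_norm_fine_ge0 mu Om u0.
have K_ge0 : 0 <= K.
  have m_ge0 : 0 <= m := Linf_norm_fine_ge0 _ _ _.
  have rate_ge0 : 0 <= `|d1 - d2| * gaminf + m * d2.
    by rewrite addr_ge0 ?mulr_ge0 // ltW.
  by rewrite addr_ge0 ?(ltW f_gt0) // -mulrA mulr_ge0 // mulr_ge0 // addr_ge0.
have uv0_le : {ae mu, forall x, Om x -> u 0 x + v 0 x <= N0uv}.
  apply: init_le; first exact: inLinfD u0_pos.1 v0_pos.1.
  by apply: filterS2 u_init v_init => x eq_u eq_v Ox; rewrite eq_u ?eq_v.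
have := Linf_comparison f_gt0 (mulr_ge0 (ltW d2_gt0) gaminf_ge0) K_ge0
  (Linf_norm_fine_ge0 _ _ _) (C1_LinfD u_C1 v_C1) uv0_le uv_growth t0.
have -> : expR (- t * f) * N0uv + (1 - expR (- t * f)) / f * K = relaxation K f N0uv t.
  by rewrite /relaxation mulNr [t * f]mulrC; field; rewrite gt_eqF.
apply: filterS3 (u_pos t0).2 (v_pos t0).2 => x u_ge0 v_ge0 uv_le Ox.
by rewrite addr_ge0 ?u_ge0 ?v_ge0 ?uv_le.
Qed.
End gray_scott.

Unset Implicit Arguments. Set Strict Implicit.

Theorem corollary2p3 (R : realType) (d : measure_display) (T : measurableType d)
  (mu : {measure set T -> \bar R}) (Om : set T)
  (mOm : measurable Om) (finOm : (mu Om < +oo)%E)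
  (d1 d2 f kappa : R) (d1_gt0 : 0 < d1) (d2_gt0 : 0 < d2)
  (f_gt0 : 0 < f) (kappa_gt0 : 0 < kappa)
  (gam1 gam2 : T -> T -> R) (gaminf : R) (gaminf_ge1 : 1 <= gaminf)
  (mgam1 : measurable_fun (Om `*` Om) (fun p : T * T => gam1 p.1 p.2))
  (mgam2 : measurable_fun (Om `*` Om) (fun p : T * T => gam2 p.1 p.2))
  (gam1_ge0 : forall x y, Om x -> Om y -> 0 <= gam1 x y)
  (gam2_ge0 : forall x y, Om x -> Om y -> 0 <= gam2 x y)
  (gam1_sym : forall x, Om x ->
     (\int[mu]_(y in Om) (gam1 y x)%:E = \int[mu]_(y in Om) (gam1 x y)%:E)%E)
  (gam2_sym : forall x, Om x ->
     (\int[mu]_(y in Om) (gam2 y x)%:E = \int[mu]_(y in Om) (gam2 x y)%:E)%E)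
  (gam1_bd : forall x, Om x -> (\int[mu]_(y in Om) (gam1 x y)%:E <= gaminf%:E)%E)
  (gam2_bd : forall x, Om x -> (\int[mu]_(y in Om) (gam2 x y)%:E <= gaminf%:E)%E)
  (u0 v0 : T -> R) (u0_pos : inLinf_pos mu Om u0) (v0_pos : inLinf_pos mu Om v0)
  (u v u' v' : R -> T -> R)
  (u_C1 : C1_Linf mu Om u u') (v_C1 : C1_Linf mu Om v v')
  (u_pos : forall t, 0 <= t -> inLinf_pos mu Om (u t))
  (v_pos : forall t, 0 <= t -> inLinf_pos mu Om (v t))
  (u_eq : forall t, 0 < t -> {ae mu, forall x, Om x ->
     u' t x = d1 * Gamma mu Om gam1 (u t) x - u t x * v t x ^+ 2
              + f * (1 - u t x)})
  (v_eq : forall t, 0 < t -> {ae mu, forall x, Om x ->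
     v' t x = d2 * Gamma mu Om gam2 (v t) x + u t x * v t x ^+ 2
              - (f + kappa) * v t x})
  (u_init : Linf_eq mu Om (u 0) u0) (v_init : Linf_eq mu Om (v 0) v0) :
  let N0u := fine (Linf_norm mu Om u0) in
  let N0uv := fine (Linf_norm mu Om (fun x => u0 x + v0 x)) in
  let m := fine (Linf_norm mu Om
             (fun x => \int[mu]_(y in Om) `|gam1 x y - gam2 x y|)) in
  [/\ (forall t, 0 <= t -> {ae mu, forall x, Om x ->
         0 <= u t x <= 1 + expR (- f * t) * Num.max (N0u - 1) 0}),
      (forall t, 0 <= t -> {ae mu, forall x, Om x ->
         0 <= u t x + v t x <=
           expR (- t * f) * N0uv
           + (1 - expR (- t * f)) / f
             * (2 * (`|d1 - d2| * gaminf + m * d2) * (1 + N0u) + f)}),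
      (Linf_norm mu Om (fun x => (\int[mu]_(y in Om) `|gam1 x y - gam2 x y|)%R)
         <= (2 * gaminf)%:E)%E,
      (forall e : R, 0 < e -> exists T0 : R, forall t, T0 <= t ->
         (Linf_norm mu Om (u t) <= (1 + e)%:E)%E) &
      ((Linf_norm mu Om u0 <= 1%:E)%E ->
         forall t, 0 <= t -> (Linf_norm mu Om (u t) <= 1%:E)%E)].
Proof.
move=> N0u N0uv m.
have u_le := u_bound mOm d1_gt0 f_gt0 gaminf_ge1 mgam1 gam1_ge0 gam1_bd
  u0_pos u_C1 u_pos u_eq u_init.
have Linf_u_le t : 0 <= t ->
    (Linf_norm mu Om (u t) <= (1 + expR (- f * t) * Num.max (N0u - 1) 0)%:E)%E.
  move=> t0; apply: ae_le_Linf_norm; apply: filterS (u_le t t0) => x H Ox.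
  by have /andP[u_ge0 u_le_x] := H Ox; rewrite ger0_norm.
have max_ge0 : 0 <= Num.max (N0u - 1) 0 by rewrite le_max lexx orbT.
split.
- exact: u_le.
- exact (uv_bound mOm d1_gt0 d2_gt0 f_gt0 kappa_gt0 gaminf_ge1 mgam1 mgam2
    gam1_ge0 gam2_ge0 gam1_bd gam2_bd u0_pos v0_pos u_C1 v_C1 u_pos v_pos
    u_eq v_eq u_init v_init).
- exact (Linf_kernel_diff_le mOm mgam1 mgam2 gam1_ge0 gam2_ge0 gam1_bd gam2_bd).
- move=> e e0; have [T0 decay] := expR_decay_le max_ge0 f_gt0 e0.
  exists (Num.max T0 0) => t; rewrite ge_max => /andP[tT0 t0].
  by apply: le_trans (Linf_u_le t t0) _; rewrite lee_fin lerD2l decay.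
- move=> u0_le1 t t0; apply: le_trans (Linf_u_le t t0) _.
  have N0u_le1 : N0u <= 1 := Linf_norm_fine_le ler01 u0_le1.
  have -> : Num.max (N0u - 1) 0 = 0 by apply/max_idPr; rewrite subr_le0.
  by rewrite mulr0 addr0.
Qed.
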